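(* For any two configurations $A,B\in\mathcal{F}_2$, there exists a feasible schedule $M$ from $A$ to $B$ over some interval $[t_0,t_1]$ of minimum makespan that does not repeat an ordering: for each of the four orderings $O$, the set $\{t\in[t_0,t_1]: M(t)\in O\}$ is empty or an interval (equivalently, the sequence of orderings visited by $M$ is a simple path in the transition graph).
   Context: Robots are axis-parallel unit squares: a robot at $p$ occupies $p+\boxdot$, $\boxdot=\{q:\|q\|_\infty\le1/2\}$. Distances use the $L_1$ norm. A configuration of two robots is a pair $(p_1,p_2)$ with $\|p_1-p_2\|_\infty\ge 1$; $\mathcal{F}_2$ is their set. A trajectory over $T=[t_0,t_1]$ is a $1$-Lipschitz (w.r.t. $L_1$) map $m:T\to\mathbb{R}^2$ with polygonal-chain image; a schedule $M=(m_1,m_2)$ is feasible if $M(t)\in\mathcal{F}_2$ for all $t$; its makespan is $t_1-t_0$. The four orderings are $\mathcal{F}_2^{\rightarrow}=\{(p_1,p_2)\in\mathcal{F}_2: x(p_1)\ge x(p_2)+1\}$, $\mathcal{F}_2^{\leftarrow}=\{x(p_2)\ge x(p_1)+1\}$, $\mathcal{F}_2^{\uparrow}=\{y(p_1)\ge y(p_2)+1\}$, $\mathcal{F}_2^{\downarrow}=\{y(p_2)\ge y(p_1)+1\}$; they cover $\mathcal{F}_2$. The transition graph is the intersection graph of the four orderings (a four-cycle: each horizontal ordering intersects each vertical one). *)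

From Stdlib Require Import Reals.
Open Scope R_scope.

Definition pt := (R * R)%type.

Definition dist1 (p q : pt) : R := Rabs (fst p - fst q) + Rabs (snd p - snd q).
Definition distinf (p q : pt) : R := Rmax (Rabs (fst p - fst q)) (Rabs (snd p - snd q)).

Definition config := (pt * pt)%type.

(* F_2 : robots (unit squares) do not overlap *)
Definition F2 (c : config) : Prop := distinf (fst c) (snd c) >= 1.

Definition ord_right (c : config) : Prop := fst (fst c) >= fst (snd c) + 1.
Definition ord_left  (c : config) : Prop := fst (snd c) >= fst (fst c) + 1.
Definition ord_up    (c : config) : Prop := snd (fst c) >= snd (snd c) + 1.
Definition ord_down  (c : config) : Prop := snd (snd c) >= snd (fst c) + 1.

Definition seg_pt (a b : pt) (l : R) : pt :=
  ((1 - l) * fst a + l * fst b, (1 - l) * snd a + l * snd b).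

Definition polygonal_image (m : R -> pt) (t0 t1 : R) : Prop :=
  exists (k : nat) (q : nat -> pt),
    forall p : pt,
      (exists t, t0 <= t <= t1 /\ m t = p) <->
      (exists (i : nat) (l : R), (i <= k)%nat /\ 0 <= l <= 1 /\ p = seg_pt (q i) (q (S i)) l).

Definition trajectory (m : R -> pt) (t0 t1 : R) : Prop :=
  (forall s t, t0 <= s <= t1 -> t0 <= t <= t1 -> dist1 (m s) (m t) <= Rabs (s - t))
  /\ polygonal_image m t0 t1.

Definition feasible_schedule (m1 m2 : R -> pt) (t0 t1 : R) (A B : config) : Prop :=
  t0 <= t1 /\
  trajectory m1 t0 t1 /\ trajectory m2 t0 t1 /\
  (forall t, t0 <= t <= t1 -> F2 (m1 t, m2 t)) /\
  (m1 t0, m2 t0) = A /\ (m1 t1, m2 t1) = B.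

Definition is_interval (S : R -> Prop) : Prop :=
  forall a b c, S a -> S b -> a <= c <= b -> S c.

Definition no_repeat_ordering (m1 m2 : R -> pt) (t0 t1 : R) (O : config -> Prop) : Prop :=
  let S := fun t => t0 <= t <= t1 /\ O (m1 t, m2 t) in
  (forall t, ~ S t) \/ is_interval S.

From Stdlib Require Import Reals Lra Lia List Classical ClassicalEpsilon.
From Coquelicot Require Import Rcomplements.
Require Coquelicot.Compactness.
Import ListNotations.
Open Scope R_scope.

(* Each ordering is a closed half-plane condition on the relative position of the
   robots, opposite orderings are disjoint, and every configuration of F_2 lies in
   some ordering.  Follow a feasible schedule from A: at the last time it lies in
   its current ordering it also lies in an adjacent one, which it enters right
   after; since an ordering once left is never re-entered, it keeps turning the
   same way around the four-cycle and reaches an ordering of B within three turns.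
   The configurations at these exit times form a route of at most four legs, each
   inside one ordering, whose straight-line cost is at most the makespan.
   Conversely, moving straight along the legs of a route at unit speed is a
   feasible schedule of makespan equal to the cost, and it does not repeat an
   ordering, because along a segment an ordering holds on an interval of times.
   Routes of bounded cost form a compact set of waypoints, so an optimal route
   exists; if A and B share an ordering the direct segment is optimal instead. *)

Lemma dist1_ge0 p q : 0 <= dist1 p q.
Proof. unfold dist1. pose proof (Rabs_pos (fst p - fst q)). pose proof (Rabs_pos (snd p - snd q)). lra. Qed.

Lemma dist1_refl p : dist1 p p = 0.
Proof. unfold dist1. rewrite !Rminus_diag, Rabs_R0. ring. Qed.

Lemma dist1_triangle p q r : dist1 p r <= dist1 p q + dist1 q r.
Proof.
  unfold dist1.
  pose proof (Rabs_triang (fst p - fst q) (fst q - fst r)).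
  pose proof (Rabs_triang (snd p - snd q) (snd q - snd r)).
  replace (fst p - fst r) with (fst p - fst q + (fst q - fst r)) by ring.
  replace (snd p - snd r) with (snd p - snd q + (snd q - snd r)) by ring.
  lra.
Qed.

Lemma dist1_eq0 p q : dist1 p q <= 0 -> p = q.
Proof.
  destruct p as [x y], q as [x' y']; unfold dist1; simpl; intro H.
  pose proof (Rabs_pos (x - x')). pose proof (Rabs_pos (y - y')).
  assert (Hx : Rabs (x - x') <= 0) by lra. assert (Hy : Rabs (y - y') <= 0) by lra.
  apply Rabs_le_between in Hx, Hy. f_equal; lra.
Qed.

Lemma dist1_seg_pt p q l1 l2 :
  dist1 (seg_pt p q l1) (seg_pt p q l2) = Rabs (l1 - l2) * dist1 p q.
Proof.
  unfold dist1, seg_pt; simpl.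
  replace ((1 - l1) * fst p + l1 * fst q - ((1 - l2) * fst p + l2 * fst q))
    with ((l1 - l2) * (fst q - fst p)) by ring.
  replace ((1 - l1) * snd p + l1 * snd q - ((1 - l2) * snd p + l2 * snd q))
    with ((l1 - l2) * (snd q - snd p)) by ring.
  rewrite !Rabs_mult, (Rabs_minus_sym (fst q)), (Rabs_minus_sym (snd q)). ring.
Qed.

Lemma infimum_approx {X : Type} (S : X -> Prop) (f : X -> R) :
  (forall x, S x -> 0 <= f x) -> (exists x, S x) ->
  exists m, (forall x, S x -> m <= f x) /\
    forall eps, 0 < eps -> exists x, S x /\ f x < m + eps.
Proof.
  intros Hpos [x0 Sx0].
  set (E := fun v => exists x, S x /\ v = - f x).
  destruct (completeness E) as [L [Hub Hlub]].
  { exists 0. intros v [x [Sx ->]]. specialize (Hpos x Sx). lra. }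
  { exists (- f x0), x0. auto. }
  exists (- L). split.
  - intros x Sx. assert (- f x <= L) by (apply Hub; exists x; auto). lra.
  - intros eps Heps. apply NNPP. intro Hno.
    assert (Hub' : is_upper_bound E (L - eps)).
    { intros v [x [Sx ->]]. apply Rnot_lt_le. intro. apply Hno. exists x. split; [exact Sx | lra]. }
    pose proof (Hlub _ Hub'). lra.
Qed.

Lemma list_min_pos {X : Type} (l : list X) (g : X -> R) (P : X -> Prop) :
  (forall t, P t -> 0 < g t) ->
  exists eps, 0 < eps /\ forall t, In t l -> P t -> eps <= g t.
Proof.
  intro Hg. induction l as [|t l IH].
  - exists 1. split; [lra | intros t []].
  - destruct IH as [e [He Hle]]. destruct (classic (P t)) as [Pt|Pt].
    + exists (Rmin e (g t)). split; [apply Rmin_pos; auto|].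
      intros u [<- | Hu] Pu; [apply Rmin_r|]. eapply Rle_trans; [apply Rmin_l | auto].
    + exists e. split; [exact He|]. intros u [<- | Hu] Pu; [contradiction | auto].
Qed.

Lemma Rmin4_pos a b c d :
  0 < a -> 0 < b -> 0 < c -> 0 < d ->
  exists m, 0 < m /\ m <= a /\ m <= b /\ m <= c /\ m <= d.
Proof.
  intros. exists (Rmin (Rmin a b) (Rmin c d)).
  unfold Rmin; repeat destruct Rle_dec; lra.
Qed.

(* Time needed to go straight from [P] to [Q] with both robots at unit L1 speed. *)
Definition cdist (P Q : config) : R := Rmax (dist1 (fst P) (fst Q)) (dist1 (snd P) (snd Q)).

Lemma cdist_fst P Q : dist1 (fst P) (fst Q) <= cdist P Q.
Proof. apply Rmax_l. Qed.

Lemma cdist_snd P Q : dist1 (snd P) (snd Q) <= cdist P Q.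
Proof. apply Rmax_r. Qed.

Lemma cdist_ge0 P Q : 0 <= cdist P Q.
Proof. pose proof (cdist_fst P Q). pose proof (dist1_ge0 (fst P) (fst Q)). lra. Qed.

Lemma cdist_refl P : cdist P P = 0.
Proof. unfold cdist. rewrite !dist1_refl. apply Rmax_left. lra. Qed.

Lemma cdist_triangle P Q S : cdist P S <= cdist P Q + cdist Q S.
Proof.
  apply Rmax_lub.
  - pose proof (dist1_triangle (fst P) (fst Q) (fst S)).
    pose proof (cdist_fst P Q). pose proof (cdist_fst Q S). lra.
  - pose proof (dist1_triangle (snd P) (snd Q) (snd S)).
    pose proof (cdist_snd P Q). pose proof (cdist_snd Q S). lra.
Qed.

Lemma cdist_sym P Q : cdist P Q = cdist Q P.
Proof.
  unfold cdist, dist1.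
  rewrite (Rabs_minus_sym (fst (fst P))), (Rabs_minus_sym (snd (fst P))),
    (Rabs_minus_sym (fst (snd P))), (Rabs_minus_sym (snd (snd P))).
  reflexivity.
Qed.

Lemma cdist_eq0 P Q : cdist P Q <= 0 -> P = Q.
Proof.
  intro H. pose proof (cdist_fst P Q). pose proof (cdist_snd P Q).
  destruct P as [p1 p2], Q as [q1 q2]; simpl in *.
  f_equal; apply dist1_eq0; lra.
Qed.

(** * Orderings *)

Inductive ordering := oR | oU | oL | oD.

Definition ordering_set (j : ordering) : config -> Prop :=
  match j with oR => ord_right | oU => ord_up | oL => ord_left | oD => ord_down end.

Definition sep (j : ordering) (c : config) : R :=
  match j with
  | oR => fst (fst c) - fst (snd c)
  | oU => snd (fst c) - snd (snd c)
  | oL => fst (snd c) - fst (fst c)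
  | oD => snd (snd c) - snd (fst c)
  end.

Definition in_ord (j : ordering) (c : config) : Prop := 1 <= sep j c.

Lemma ordering_set_in_ord j c : ordering_set j c <-> in_ord j c.
Proof. destruct j; unfold in_ord; simpl; unfold ord_right, ord_up, ord_left, ord_down; lra. Qed.

Definition next (j : ordering) : ordering :=
  match j with oR => oU | oU => oL | oL => oD | oD => oR end.
Definition prev (j : ordering) : ordering :=
  match j with oR => oD | oU => oR | oL => oU | oD => oL end.
Definition step (e : bool) (j : ordering) : ordering := if e then next j else prev j.

Lemma sep_next_next j c : sep (next (next j)) c = - sep j c.
Proof. destruct j; simpl; ring. Qed.

Lemma step_negb_step e j : step (negb e) (step e j) = j.
Proof. destruct e, j; reflexivity. Qed.

Lemma step_4 e j : Nat.iter 4 (step e) j = j.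
Proof. destruct e, j; reflexivity. Qed.

Lemma ordering_cases j j' : j' = j \/ j' = next j \/ j' = next (next j) \/ j' = prev j.
Proof. destruct j, j'; simpl; auto 10. Qed.

Lemma F2_iff_in_ord c : F2 c <-> exists j, in_ord j c.
Proof.
  unfold F2, distinf, in_ord.
  destruct c as [[x1 y1] [x2 y2]]; simpl.
  unfold Rmax, Rabs.
  split.
  - intro H. repeat destruct Rcase_abs; destruct Rle_dec;
      solve [exists oR; simpl; lra | exists oU; simpl; lra
            | exists oL; simpl; lra | exists oD; simpl; lra].
  - intros [j H]. destruct j; simpl in H; repeat destruct Rcase_abs; destruct Rle_dec; lra.
Qed.

Lemma sep_lipschitz j P Q : Rabs (sep j P - sep j Q) <= 2 * cdist P Q.
Proof.
  pose proof (cdist_fst P Q). pose proof (cdist_snd P Q).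
  destruct P as [[x1 y1] [x2 y2]], Q as [[x1' y1'] [x2' y2']].
  unfold dist1 in *; simpl in *.
  apply Rabs_le_between; unfold Rabs in *.
  destruct j; simpl; repeat destruct Rcase_abs; lra.
Qed.

Definition cseg (P Q : config) (l : R) : config :=
  (seg_pt (fst P) (fst Q) l, seg_pt (snd P) (snd Q) l).

Lemma sep_cseg j P Q l : sep j (cseg P Q l) = (1 - l) * sep j P + l * sep j Q.
Proof. destruct j; unfold cseg, seg_pt; simpl; ring. Qed.

Lemma cdist_cseg P Q l1 l2 : cdist (cseg P Q l1) (cseg P Q l2) = Rabs (l1 - l2) * cdist P Q.
Proof. unfold cdist, cseg; simpl. rewrite !dist1_seg_pt. apply RmaxRmult, Rabs_pos. Qed.

Lemma in_ord_cseg j P Q l : 0 <= l <= 1 -> in_ord j P -> in_ord j Q -> in_ord j (cseg P Q l).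
Proof. unfold in_ord. rewrite sep_cseg. nra. Qed.

Lemma in_ord_cseg_end j P Q l : 0 <= l <= 1 -> in_ord j (cseg P Q l) -> in_ord j P \/ in_ord j Q.
Proof.
  unfold in_ord. rewrite sep_cseg. intros Hl H.
  destruct (Rle_or_lt 1 (sep j P)); [now left|]. right.
  destruct (Req_dec l 1) as [->|Hl1]; [lra|].
  destruct (Rle_or_lt 1 (sep j Q)); [easy|].
  assert (0 < (1 - l) * (1 - sep j P)) by (apply Rmult_lt_0_compat; lra).
  assert (0 <= l * (1 - sep j Q)) by (apply Rmult_le_pos; lra).
  lra.
Qed.

(** * Unit-speed motions *)

Definition unit_speed (C : R -> config) (a b : R) : Prop :=
  forall s t, a <= s <= b -> a <= t <= b -> cdist (C s) (C t) <= Rabs (s - t).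

Lemma feasible_unit_speed n1 n2 s0 s1 A B :
  feasible_schedule n1 n2 s0 s1 A B -> unit_speed (fun t => (n1 t, n2 t)) s0 s1.
Proof.
  intros (_ & [H1 _] & [H2 _] & _) s t Hs Ht. apply Rmax_lub; [apply H1 | apply H2]; assumption.
Qed.

Lemma unit_speed_cdist C s0 s1 a b :
  unit_speed C s0 s1 -> s0 <= a -> a <= b -> b <= s1 -> cdist (C a) (C b) <= b - a.
Proof.
  intros HC Ha Hab Hb. pose proof (HC a b ltac:(lra) ltac:(lra)) as H.
  rewrite Rabs_left1 in H by lra. lra.
Qed.

Lemma feasible_makespan_ge_cdist n1 n2 s0 s1 A B :
  feasible_schedule n1 n2 s0 s1 A B -> cdist A B <= s1 - s0.
Proof.
  intro Hn. pose proof (feasible_unit_speed _ _ _ _ _ _ Hn) as Hspeed.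
  destruct Hn as (Hs & _ & _ & _ & <- & <-).
  exact (unit_speed_cdist _ _ _ s0 s1 Hspeed ltac:(lra) Hs ltac:(lra)).
Qed.

(* For [P = Q] the division by [cdist P Q = 0] yields [0], so the motion stays at [P]. *)
Definition segment (P Q : config) (s t : R) : config := cseg P Q ((t - s) / cdist P Q).

Lemma segment_start P Q s : segment P Q s s = P.
Proof.
  unfold segment, cseg, seg_pt. rewrite Rminus_diag, Rdiv_0_l.
  destruct P as [[] []]; simpl; f_equal; f_equal; ring.
Qed.

Lemma segment_param P Q s t : s <= t <= s + cdist P Q -> 0 <= (t - s) / cdist P Q <= 1.
Proof.
  intro Ht. destruct (Req_dec (cdist P Q) 0) as [E|E].
  - rewrite E, Rdiv_0_r. lra.
  - assert (0 < cdist P Q) by (destruct (cdist_ge0 P Q); [easy | congruence]).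
    split; [apply Rdiv_le_0_compat | apply (Rdiv_le_1 (t - s))]; lra.
Qed.

Lemma segment_cseg P Q s l : segment P Q s (s + l * cdist P Q) = cseg P Q l.
Proof.
  unfold segment. destruct (Req_dec (cdist P Q) 0) as [E|E].
  - assert (P = Q) as <- by (apply cdist_eq0; lra).
    destruct P as [[] []]; unfold cseg, seg_pt; simpl; f_equal; f_equal; ring.
  - f_equal. field. exact E.
Qed.

Lemma segment_end P Q s : segment P Q s (s + cdist P Q) = Q.
Proof.
  rewrite <- (Rmult_1_l (cdist P Q)), segment_cseg.
  destruct Q as [[] []]; unfold cseg, seg_pt; simpl; f_equal; f_equal; ring.
Qed.

Lemma segment_unit_speed P Q s a b : unit_speed (segment P Q s) a b.
Proof.
  intros t1 t2 _ _. unfold segment. rewrite cdist_cseg.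
  destruct (Req_dec (cdist P Q) 0) as [E|E].
  - rewrite E, Rmult_0_r. apply Rabs_pos.
  - pose proof (cdist_ge0 P Q).
    replace ((t1 - s) / cdist P Q - (t2 - s) / cdist P Q) with ((t1 - t2) / cdist P Q)
      by (field; exact E).
    rewrite Rabs_div, (Rabs_right (cdist P Q)) by lra.
    right. field. exact E.
Qed.

Lemma sep_segment j P Q s t :
  sep j (segment P Q s t) = sep j P + (t - s) * ((sep j Q - sep j P) / cdist P Q).
Proof. unfold segment. rewrite sep_cseg. unfold Rdiv. ring. Qed.

Lemma segment_in_ord_interval P Q s j a b :
  is_interval (fun t => a <= t <= b /\ in_ord j (segment P Q s t)).
Proof.
  intros t1 t2 t [Ht1 I1] [Ht2 I2] Ht. split; [lra|].
  unfold in_ord in *. rewrite sep_segment in *.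
  set (m := (sep j Q - sep j P) / cdist P Q) in *.
  destruct (Rle_or_lt 0 m).
  - assert ((t1 - s) * m <= (t - s) * m) by (apply Rmult_le_compat_r; lra). lra.
  - assert ((t2 - s) * m <= (t - s) * m) by nra. lra.
Qed.

Definition glue {X : Type} (b : R) (f g : R -> X) (t : R) : X :=
  if Rle_dec t b then f t else g t.

Lemma glue_unit_speed b f g a c :
  a <= b <= c -> f b = g b -> unit_speed f a b -> unit_speed g b c ->
  unit_speed (glue b f g) a c.
Proof.
  intros Hb Hfg Hf Hg s t Hs Ht. unfold glue.
  destruct (Rle_dec s b), (Rle_dec t b).
  - apply Hf; lra.
  - pose proof (Hf s b ltac:(lra) ltac:(lra)). pose proof (Hg b t ltac:(lra) ltac:(lra)).
    pose proof (cdist_triangle (f s) (f b) (g t)). rewrite Hfg in *.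
    unfold Rabs in *; repeat destruct Rcase_abs; lra.
  - pose proof (Hg s b ltac:(lra) ltac:(lra)). pose proof (Hf b t ltac:(lra) ltac:(lra)).
    pose proof (cdist_triangle (g s) (g b) (f t)). rewrite <- Hfg in *.
    unfold Rabs in *; repeat destruct Rcase_abs; lra.
  - apply Hg; lra.
Qed.

Lemma glue_in_ord_interval b f g a c j :
  a <= b <= c -> f b = g b ->
  is_interval (fun t => a <= t <= b /\ in_ord j (f t)) ->
  is_interval (fun t => b <= t <= c /\ in_ord j (g t)) ->
  ((exists t, a <= t <= b /\ in_ord j (f t)) ->
   (exists t, b <= t <= c /\ in_ord j (g t)) -> in_ord j (f b)) ->
  is_interval (fun t => a <= t <= c /\ in_ord j (glue b f g t)).
Proof.
  intros Hb Hfg Hf Hg Hjoin t1 t2 t [Ht1 I1] [Ht2 I2] Ht. unfold glue in *.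
  split; [lra|].
  destruct (Rle_dec t1 b), (Rle_dec t2 b); [| | lra |].
  - destruct (Rle_dec t b); [|lra]. apply (Hf t1 t2 t); repeat split; auto; lra.
  - assert (Jb : in_ord j (f b)) by (apply Hjoin; [exists t1 | exists t2]; split; auto; lra).
    destruct (Rle_dec t b).
    + apply (Hf t1 b t); repeat split; auto; lra.
    + apply (Hg b t2 t); rewrite <- ?Hfg; repeat split; auto; lra.
  - destruct (Rle_dec t b); [lra|]. apply (Hg t1 t2 t); repeat split; auto; lra.
Qed.

(** * Polygonal schedules *)

Fixpoint arrival (W : nat -> config) (i : nat) : R :=
  match i with O => 0 | S i => arrival W i + cdist (W i) (W (S i)) end.

Fixpoint polyline (W : nat -> config) (n : nat) : R -> config :=
  match n with
  | O => fun _ => W O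
  | S n => glue (arrival W n) (polyline W n) (segment (W n) (W (S n)) (arrival W n))
  end.

Lemma arrival_le_S W i : arrival W i <= arrival W (S i).
Proof. simpl. pose proof (cdist_ge0 (W i) (W (S i))). lra. Qed.

Lemma arrival_mono W i k : (i <= k)%nat -> arrival W i <= arrival W k.
Proof.
  induction 1 as [|k _ IH]; [lra|].
  pose proof (arrival_le_S W k). lra.
Qed.

Lemma arrival_ge0 W i : 0 <= arrival W i.
Proof. apply (arrival_mono W 0). lia. Qed.

Lemma arrival_cover W n t :
  (0 < n)%nat -> 0 <= t <= arrival W n ->
  exists i, (i < n)%nat /\ arrival W i <= t <= arrival W (S i).
Proof.
  induction n as [|n IH]; intros Hn Ht; [lia|].
  destruct (Rle_dec t (arrival W n)) as [Hle|Hgt].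
  - destruct n as [|n].
    + exists 0%nat. split; [lia|]. simpl in *. lra.
    + destruct (IH ltac:(lia) ltac:(lra)) as [i [Hi Hti]]. exists i. split; [lia|exact Hti].
  - exists n. split; [lia|lra].
Qed.

Lemma polyline_start W n : polyline W n 0 = W O.
Proof.
  induction n as [|n IH]; [reflexivity|]. simpl. unfold glue.
  destruct (Rle_dec 0 (arrival W n)) as [_|H]; [exact IH|].
  exfalso. apply H, arrival_ge0.
Qed.

Lemma polyline_at_arrival W n : polyline W n (arrival W n) = W n.
Proof.
  induction n as [|n IH]; [reflexivity|]. simpl. unfold glue.
  destruct (Rle_dec _ (arrival W n)) as [H|H].
  - pose proof (cdist_ge0 (W n) (W (S n))).
    assert (E : W n = W (S n)) by (apply cdist_eq0; lra).
    replace (arrival W n + cdist (W n) (W (S n))) with (arrival W n) by lra.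
    rewrite IH. exact E.
  - apply segment_end.
Qed.

Lemma polyline_on_segment W n i t :
  (i < n)%nat -> arrival W i <= t <= arrival W (S i) ->
  polyline W n t = segment (W i) (W (S i)) (arrival W i) t.
Proof.
  induction n as [|n IH]; intros Hi Ht; [lia|]. simpl. unfold glue.
  destruct (Rle_dec t (arrival W n)) as [Hle|Hgt].
  - destruct (Nat.eq_dec i n) as [->|Hin].
    + replace t with (arrival W n) by (simpl in Ht; lra).
      rewrite polyline_at_arrival, segment_start. reflexivity.
    + apply IH; [lia | exact Ht].
  - destruct (Nat.eq_dec i n) as [->|Hin]; [reflexivity|].
    pose proof (arrival_mono W (S i) n ltac:(lia)). lra.
Qed.

Lemma polyline_unit_speed W n : unit_speed (polyline W n) 0 (arrival W n).
Proof.
  induction n as [|n IH].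
  - intros s t _ _. simpl. rewrite cdist_refl. apply Rabs_pos.
  - apply glue_unit_speed.
    + pose proof (arrival_ge0 W n). pose proof (arrival_le_S W n). lra.
    + rewrite polyline_at_arrival, segment_start. reflexivity.
    + exact IH.
    + apply segment_unit_speed.
Qed.

Lemma polyline_cseg W n t :
  (0 < n)%nat -> 0 <= t <= arrival W n ->
  exists i l, (i < n)%nat /\ 0 <= l <= 1 /\ polyline W n t = cseg (W i) (W (S i)) l.
Proof.
  intros Hn Ht. destruct (arrival_cover W n t Hn Ht) as [i [Hi Hti]].
  exists i, ((t - arrival W i) / cdist (W i) (W (S i))). split; [exact Hi|]. split.
  - apply segment_param. exact Hti.
  - apply polyline_on_segment; assumption.
Qed.

Lemma polyline_onto W n i l :
  (i < n)%nat -> 0 <= l <= 1 ->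
  exists t, 0 <= t <= arrival W n /\ polyline W n t = cseg (W i) (W (S i)) l.
Proof.
  intros Hi Hl. pose proof (cdist_ge0 (W i) (W (S i))).
  assert (Hti : arrival W i <= arrival W i + l * cdist (W i) (W (S i)) <= arrival W (S i))
    by (simpl; nra).
  exists (arrival W i + l * cdist (W i) (W (S i))). split.
  - pose proof (arrival_ge0 W i). pose proof (arrival_mono W (S i) n Hi). lra.
  - rewrite (polyline_on_segment W n i) by assumption. apply segment_cseg.
Qed.

Definition ordering_linked (W : nat -> config) (n : nat) : Prop :=
  forall i, (i < n)%nat -> exists j, in_ord j (W i) /\ in_ord j (W (S i)).

Definition convex_indices (j : ordering) (W : nat -> config) (n : nat) : Prop :=
  forall p q r, (p < q)%nat -> (q < r)%nat -> (r <= n)%nat ->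
  in_ord j (W p) -> in_ord j (W r) -> in_ord j (W q).

Lemma polyline_F2 W n t :
  (0 < n)%nat -> ordering_linked W n -> 0 <= t <= arrival W n -> F2 (polyline W n t).
Proof.
  intros Hn Hlink Ht. destruct (polyline_cseg W n t Hn Ht) as [i [l [Hi [Hl ->]]]].
  destruct (Hlink i Hi) as [j [Hj1 Hj2]].
  apply F2_iff_in_ord. exists j. apply in_ord_cseg; assumption.
Qed.

Lemma polyline_meets W n j :
  (exists t, 0 <= t <= arrival W n /\ in_ord j (polyline W n t)) ->
  exists i, (i <= n)%nat /\ in_ord j (W i).
Proof.
  intros [t [Ht Hj]]. destruct n as [|n]; [now exists 0%nat|].
  destruct (polyline_cseg W (S n) t ltac:(lia) Ht) as [i [l [Hi [Hl E]]]]. rewrite E in Hj.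
  destruct (in_ord_cseg_end j _ _ l Hl Hj); [exists i | exists (S i)]; split; auto; lia.
Qed.

Lemma polyline_in_ord_interval W n j :
  convex_indices j W n -> is_interval (fun t => 0 <= t <= arrival W n /\ in_ord j (polyline W n t)).
Proof.
  induction n as [|n IH]; intro Hconv.
  - intros t1 t2 t [Ht1 I1] [Ht2 I2] Ht. simpl in *. split; [lra | exact I1].
  - apply glue_in_ord_interval.
    + pose proof (arrival_ge0 W n). pose proof (arrival_le_S W n). lra.
    + rewrite polyline_at_arrival, segment_start. reflexivity.
    + apply IH. intros p q r Hpq Hqr Hr. apply Hconv; lia.
    + apply segment_in_ord_interval.
    + intros Hmeet [t [Ht Hj]]. rewrite polyline_at_arrival.
      destruct (polyline_meets W n j Hmeet) as [i [Hi Hji]].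
      unfold segment in Hj. apply in_ord_cseg_end in Hj as [Hn | HSn];
        [exact Hn | | apply segment_param; exact Ht].
      destruct (Nat.eq_dec i n) as [<-|Hin]; [exact Hji|].
      apply (Hconv i n (S n)); auto; lia.
Qed.

Lemma polyline_trajectory (pr : config -> pt) W n :
  (0 < n)%nat ->
  (forall P Q, dist1 (pr P) (pr Q) <= cdist P Q) ->
  (forall P Q l, pr (cseg P Q l) = seg_pt (pr P) (pr Q) l) ->
  trajectory (fun t => pr (polyline W n t)) 0 (arrival W n).
Proof.
  intros Hn Hdist Hseg. split.
  - intros s t Hs Ht. eapply Rle_trans; [apply Hdist | apply polyline_unit_speed; assumption].
  - exists (pred n), (fun i => pr (W i)). intro p. split.
    + intros [t [Ht <-]]. destruct (polyline_cseg W n t Hn Ht) as [i [l [Hi [Hl ->]]]].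
      exists i, l. split; [lia|]. split; [exact Hl | apply Hseg].
    + intros [i [l [Hi [Hl ->]]]]. destruct (polyline_onto W n i l ltac:(lia) Hl) as [t [Ht E]].
      exists t. split; [exact Ht|]. rewrite E. apply Hseg.
Qed.

Definition no_repeat_schedule (m1 m2 : R -> pt) (t0 t1 : R) : Prop :=
  forall j, no_repeat_ordering m1 m2 t0 t1 (ordering_set j).

Lemma polyline_schedule W n :
  (0 < n)%nat -> ordering_linked W n -> (forall j, convex_indices j W n) ->
  let m1 t := fst (polyline W n t) in
  let m2 t := snd (polyline W n t) in
  feasible_schedule m1 m2 0 (arrival W n) (W O) (W n) /\ no_repeat_schedule m1 m2 0 (arrival W n).
Proof.
  intros Hn Hlink Hconv m1 m2. split.
  - split; [apply arrival_ge0|].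
    split; [apply polyline_trajectory; auto using cdist_fst|].
    split; [apply polyline_trajectory; auto using cdist_snd|].
    split; [intros t Ht; unfold m1, m2; rewrite <- surjective_pairing; apply polyline_F2; auto|].
    unfold m1, m2. rewrite <- !surjective_pairing, polyline_start, polyline_at_arrival. auto.
  - intro j. right. intros t1 t2 t H1 H2 Ht.
    unfold m1, m2 in *. cbv beta in *. rewrite <- surjective_pairing, ordering_set_in_ord in *.
    apply (polyline_in_ord_interval W n j (Hconv j) t1 t2 t); assumption.
Qed.

(** * Routes *)

Definition waypoints (A W1 W2 W3 B : config) (i : nat) : config :=
  match i with 0 => A | 1 => W1 | 2 => W2 | 3 => W3 | _ => B end.

(* Ordering of the [i]-th leg of a route that starts in [j0], turns [k] times in
   direction [e] and then stays put; waypoints after the last turn coincide with the end. *)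
Definition leg_ordering (j0 : ordering) (e : bool) (k i : nat) : ordering :=
  Nat.iter (Nat.min i k) (step e) j0.

Definition route (j0 : ordering) (e : bool) (k : nat) (W : nat -> config) : Prop :=
  (k < 4)%nat /\
  (forall i, (i < 4)%nat ->
     in_ord (leg_ordering j0 e k i) (W i) /\ in_ord (leg_ordering j0 e k i) (W (S i))) /\
  (forall i, (k < i < 4)%nat -> W i = W 4%nat).

Section Exits.

Variables (C : R -> config) (s0 s1 : R).
Hypothesis C_speed : unit_speed C s0 s1.
Hypothesis C_F2 : forall t, s0 <= t <= s1 -> F2 (C t).

Lemma sep_along j s t :
  s0 <= s <= s1 -> s0 <= t <= s1 -> Rabs (sep j (C s) - sep j (C t)) <= 2 * Rabs (s - t).
Proof.
  intros Hs Ht. eapply Rle_trans; [apply sep_lipschitz|].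
  pose proof (C_speed s t Hs Ht). lra.
Qed.

Lemma in_ord_limit j r :
  s0 <= r <= s1 ->
  (forall eps, 0 < eps -> exists t, s0 <= t <= s1 /\ Rabs (t - r) < eps /\ in_ord j (C t)) ->
  in_ord j (C r).
Proof.
  intros Hr Hnear. apply Rnot_lt_le. intro Hlt.
  destruct (Hnear ((1 - sep j (C r)) / 2)) as [t [Ht [Htr Hj]]]; [lra|].
  pose proof (sep_along j t r Ht Hr) as Hsep. apply Rabs_le_between in Hsep.
  unfold in_ord in Hj. lra.
Qed.

Lemma last_exit j ts :
  s0 <= ts <= s1 -> in_ord j (C ts) -> ~ in_ord j (C s1) ->
  exists r, ts <= r < s1 /\ in_ord j (C r) /\ (forall t, r < t <= s1 -> ~ in_ord j (C t)).
Proof.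
  intros Hts Hj Hj1.
  set (E := fun t => ts <= t <= s1 /\ in_ord j (C t)).
  destruct (completeness E) as [r [Hub Hlub]].
  - exists s1. intros t [Ht _]. lra.
  - exists ts. split; [lra | exact Hj].
  - assert (Hr : ts <= r <= s1).
    { split; [apply Hub; split; [lra | exact Hj]|]. apply Hlub. intros t [Ht _]. lra. }
    assert (Hjr : in_ord j (C r)).
    { apply in_ord_limit; [lra|]. intros eps Heps. apply NNPP. intro Hfar.
      assert (Hub' : is_upper_bound E (r - eps)).
      { intros t [Ht Hjt]. apply Rnot_lt_le. intro Hlt. apply Hfar. exists t.
        assert (t <= r) by (apply Hub; split; assumption).
        split; [lra|]. split; [apply Rabs_lt_between; lra | exact Hjt]. }
      pose proof (Hlub _ Hub'). lra. }
    exists r. split; [|split; [exact Hjr|]].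
    + split; [lra|]. destruct (Req_dec r s1) as [->|]; [contradiction | lra].
    + intros t Ht Hjt. assert (t <= r) by (apply Hub; split; [lra | exact Hjt]). lra.
Qed.

Definition enters_after (j : ordering) (r : R) : Prop :=
  forall eps, 0 < eps -> exists t, r < t <= s1 /\ t < r + eps /\ in_ord j (C t).

Lemma exit_direction j r :
  s0 <= r < s1 -> in_ord j (C r) -> (forall t, r < t <= s1 -> ~ in_ord j (C t)) ->
  exists e, in_ord (step e j) (C r) /\ enters_after (step e j) r.
Proof.
  intros Hr Hj Hleave.
  (* Shortly after [r] the robots are in neither [j] nor its opposite. *)
  assert (Hside : forall t, r < t <= s1 -> t <= r + 1 / 4 ->
                  in_ord (next j) (C t) \/ in_ord (prev j) (C t)).
  { intros t Ht Ht'. destruct (proj1 (F2_iff_in_ord _) (C_F2 t ltac:(lra))) as [j' Hj'].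
    destruct (ordering_cases j j') as [->|[->|[->| ->]]]; auto.
    - exfalso. exact (Hleave t Ht Hj').
    - exfalso. unfold in_ord in Hj, Hj'. rewrite sep_next_next in Hj'.
      pose proof (sep_along j t r ltac:(lra) ltac:(lra)) as Hsep.
      rewrite (Rabs_right (t - r)) in Hsep by lra. apply Rabs_le_between in Hsep. lra. }
  assert (Henter : exists e, enters_after (step e j) r).
  { destruct (classic (enters_after (next j) r)) as [H|H]; [now exists true|].
    exists false. intros eps Heps.
    apply not_all_ex_not in H as [eps' H]. apply imply_to_and in H as [Heps' H].
    destruct (Rmin4_pos eps eps' (s1 - r) (1 / 4)) as [d (? & ? & ? & ? & ?)]; try lra.
    exists (r + d / 2). split; [lra|]. split; [lra|].
    destruct (Hside (r + d / 2)) as [Hn | Hp]; [lra | lra | | exact Hp].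
    exfalso. apply H. exists (r + d / 2). split; [lra|]. split; [lra | exact Hn]. }
  destruct Henter as [e He]. exists e. split; [|exact He].
  apply in_ord_limit; [lra|]. intros eps Heps.
  destruct (He eps Heps) as [t [Ht [Hte Hj']]].
  exists t. split; [lra|]. split; [apply Rabs_lt_between; lra | exact Hj'].
Qed.

Lemma exit_step j ts :
  s0 <= ts <= s1 -> in_ord j (C ts) -> ~ in_ord j (C s1) ->
  exists r e, ts <= r < s1 /\ in_ord j (C r) /\ in_ord (step e j) (C r) /\
    (forall t, r < t <= s1 -> ~ in_ord j (C t)) /\ enters_after (step e j) r.
Proof.
  intros Hts Hj Hj1.
  destruct (last_exit j ts Hts Hj Hj1) as [r (Hr & Hjr & Hleave)].
  destruct (exit_direction j r ltac:(lra) Hjr Hleave) as [e [He Henter]].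
  exists r, e. auto.
Qed.

(* Once [j] has been left for good, the next exit keeps turning the same way. *)
Lemma exit_forward e j r0 ts :
  s0 <= r0 <= ts -> ts <= s1 -> (forall t, r0 < t <= s1 -> ~ in_ord j (C t)) ->
  in_ord (step e j) (C ts) -> ~ in_ord (step e j) (C s1) ->
  exists r, ts <= r < s1 /\ in_ord (step e j) (C r) /\ in_ord (step e (step e j)) (C r) /\
    (forall t, r < t <= s1 -> ~ in_ord (step e j) (C t)) /\ enters_after (step e (step e j)) r.
Proof.
  intros Hr0 Hts Hgone Hj Hj1.
  destruct (exit_step (step e j) ts ltac:(lra) Hj Hj1) as (r & e' & Hr & Hjr & He' & Hleave & Henter).
  destruct (Bool.bool_dec e' e) as [->|Hne].
  - exists r. auto.
  - exfalso. replace e' with (negb e) in Henter by (destruct e, e'; cbn; congruence).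
    rewrite step_negb_step in Henter.
    destruct (Henter 1 ltac:(lra)) as [t (Ht & _ & Hjt)].
    exact (Hgone t ltac:(lra) Hjt).
Qed.

Local Ltac check_route :=
  split; [lia|]; split;
  [ intros i Hi; destruct i as [|[|[|[|i]]]]; [..|lia]; simpl; auto
  | intros i Hi; destruct i as [|[|[|[|i]]]]; simpl; try lia; reflexivity ].

Lemma exit_route j0 :
  s0 <= s1 -> in_ord j0 (C s0) ->
  exists e k a1 a2 a3, s0 <= a1 <= a2 /\ a2 <= a3 <= s1 /\
    route j0 e k (waypoints (C s0) (C a1) (C a2) (C a3) (C s1)).
Proof.
  intros Hs Hj0.
  destruct (classic (in_ord j0 (C s1))) as [B0|B0].
  { exists true, 0%nat, s1, s1, s1. split; [lra|]. split; [lra|]. check_route. }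
  destruct (exit_step j0 s0 ltac:(lra) Hj0 B0) as (r1 & e & Hr1 & H01 & H11 & Hgone0 & _).
  destruct (classic (in_ord (step e j0) (C s1))) as [B1|B1].
  { exists e, 1%nat, r1, s1, s1. split; [lra|]. split; [lra|]. check_route. }
  destruct (exit_forward e j0 r1 r1 ltac:(lra) ltac:(lra) Hgone0 H11 B1)
    as (r2 & Hr2 & H12 & H22 & Hgone1 & _).
  destruct (classic (in_ord (step e (step e j0)) (C s1))) as [B2|B2].
  { exists e, 2%nat, r1, r2, s1. split; [lra|]. split; [lra|]. check_route. }
  destruct (exit_forward e (step e j0) r2 r2 ltac:(lra) ltac:(lra) Hgone1 H22 B2)
    as (r3 & Hr3 & H23 & H33 & Hgone2 & _).
  destruct (classic (in_ord (step e (step e (step e j0))) (C s1))) as [B3|B3].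
  { exists e, 3%nat, r1, r2, r3. split; [lra|]. split; [lra|]. check_route. }
  (* A fourth turn in the same direction would re-enter [j0]. *)
  exfalso.
  destruct (exit_forward e (step e (step e j0)) r3 r3 ltac:(lra) ltac:(lra) Hgone2 H33 B3)
    as (r4 & Hr4 & _ & _ & _ & Henter).
  change (step e (step e (step e (step e j0)))) with (Nat.iter 4 (step e) j0) in Henter.
  rewrite step_4 in Henter. destruct (Henter 1 ltac:(lra)) as [t (Ht & _ & Hjt)].
  exact (Hgone0 t ltac:(lra) Hjt).
Qed.

End Exits.

Lemma schedule_route n1 n2 s0 s1 A B :
  feasible_schedule n1 n2 s0 s1 A B ->
  exists j0 e k W1 W2 W3,
    route j0 e k (waypoints A W1 W2 W3 B) /\ arrival (waypoints A W1 W2 W3 B) 4 <= s1 - s0.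
Proof.
  intros Hfeas. pose proof (feasible_unit_speed _ _ _ _ _ _ Hfeas) as Hspeed.
  destruct Hfeas as (Hs & _ & _ & HF2 & <- & <-).
  destruct (proj1 (F2_iff_in_ord _) (HF2 s0 ltac:(lra))) as [j0 Hj0].
  destruct (exit_route _ s0 s1 Hspeed HF2 j0 Hs Hj0) as (e & k & a1 & a2 & a3 & Ha12 & Ha23 & Hroute).
  exists j0, e, k, (n1 a1, n2 a1), (n1 a2, n2 a2), (n1 a3, n2 a3). split; [exact Hroute|].
  pose proof (unit_speed_cdist _ _ _ s0 a1 Hspeed). pose proof (unit_speed_cdist _ _ _ a1 a2 Hspeed).
  pose proof (unit_speed_cdist _ _ _ a2 a3 Hspeed). pose proof (unit_speed_cdist _ _ _ a3 s1 Hspeed).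
  simpl. lra.
Qed.

(* Consecutive legs are one turn apart on the four-cycle and opposite orderings are
   disjoint, so an ordering holds only at waypoints of the legs that carry it, except
   possibly at the two ends, which share no ordering once the route turns at all. *)
Lemma route_convex j0 e k W :
  route j0 e k W -> ((0 < k)%nat -> forall j, ~ (in_ord j (W 0%nat) /\ in_ord j (W 4%nat))) ->
  forall j, convex_indices j W 4.
Proof.
  intros (Hk & Hleg & Hpad) Hsep j p q r Hpq Hqr Hr.
  destruct (Hleg 0%nat) as [L0 L0']; [lia|]. destruct (Hleg 1%nat) as [L1 L1']; [lia|].
  destruct (Hleg 2%nat) as [L2 L2']; [lia|]. destruct (Hleg 3%nat) as [L3 L3']; [lia|].
  assert (Hends : k = 0%nat \/ sep j (W 0%nat) < 1 \/ sep j (W 4%nat) < 1).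
  { destruct k as [|k]; [now left|]. right. specialize (Hsep ltac:(lia) j). unfold in_ord in Hsep.
    destruct (Rlt_le_dec (sep j (W 0%nat)) 1); [now left|].
    destruct (Rlt_le_dec (sep j (W 4%nat)) 1); [now right|]. tauto. }
  clear Hleg Hsep.
  destruct k as [|[|[|[|k]]]]; [| | | |lia];
    destruct p as [|[|[|p]]], q as [|[|[|[|q]]]], r as [|[|[|[|[|r]]]]]; try lia;
    try (rewrite (Hpad 1%nat) in * by lia); try (rewrite (Hpad 2%nat) in * by lia);
    try (rewrite (Hpad 3%nat) in * by lia);
    destruct Hends as [?|[?|?]]; try discriminate;
    destruct j0, e, j; unfold in_ord, leg_ordering in *; simpl in *; lra.
Qed.

Lemma route_schedule j0 e k W :
  route j0 e k W -> ((0 < k)%nat -> forall j, ~ (in_ord j (W 0%nat) /\ in_ord j (W 4%nat))) ->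
  let m1 t := fst (polyline W 4 t) in
  let m2 t := snd (polyline W 4 t) in
  feasible_schedule m1 m2 0 (arrival W 4) (W 0%nat) (W 4%nat) /\
  no_repeat_schedule m1 m2 0 (arrival W 4).
Proof.
  intros Hroute Hsep. apply polyline_schedule; [lia | | exact (route_convex _ _ _ _ Hroute Hsep)].
  intros i Hi. exists (leg_ordering j0 e k i). apply Hroute, Hi.
Qed.

Lemma direct_route j A B : in_ord j A -> in_ord j B -> route j true 0 (waypoints A B B B B).
Proof.
  intros HA HB. split; [lia|]. split.
  - intros i Hi. destruct i as [|[|[|[|i]]]]; [..|lia]; split; assumption.
  - intros i Hi. destruct i as [|[|[|[|i]]]]; try lia; reflexivity.
Qed.

Definition corner (j : ordering) : config :=
  match j with
  | oR => ((1, 1), (0, 0))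
  | oU => ((-1, 1), (0, 0))
  | oL => ((-1, -1), (0, 0))
  | oD => ((1, -1), (0, 0))
  end.

Lemma route_exists A B :
  F2 A -> F2 B -> exists j0 e k W1 W2 W3, route j0 e k (waypoints A W1 W2 W3 B).
Proof.
  intros HA HB.
  destruct (proj1 (F2_iff_in_ord A) HA) as [j0 HA0], (proj1 (F2_iff_in_ord B) HB) as [jB HB0].
  assert (Hk : exists k, (k < 4)%nat /\ Nat.iter k next j0 = jB).
  { destruct j0, jB;
      solve [exists 0%nat; split; [lia | reflexivity] | exists 1%nat; split; [lia | reflexivity]
            | exists 2%nat; split; [lia | reflexivity] | exists 3%nat; split; [lia | reflexivity]]. }
  destruct Hk as [k [Hk <-]].
  (* Turn counterclockwise through corners lying in two adjacent orderings. *)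
  set (W i := if (i <=? k)%nat then corner (Nat.iter (pred i) next j0) else B).
  exists j0, true, k, (W 1%nat), (W 2%nat), (W 3%nat). unfold W.
  split; [exact Hk|]. split.
  - intros i Hi. destruct k as [|[|[|[|k]]]], i as [|[|[|[|i]]]]; try lia;
      destruct j0; unfold leg_ordering; simpl in *; unfold in_ord in *; simpl in *; auto; lra.
  - intros i Hi. destruct k as [|[|[|[|k]]]], i as [|[|[|[|i]]]]; try lia; reflexivity.
Qed.

(** * Optimal routes *)

Notation Tn := Compactness.Tn.
Notation close_n := Compactness.close_n.
Notation bounded_n := Compactness.bounded_n.

Section ClosedSets.

Variable n : nat.

Definition closed_Tn (S : Tn n R -> Prop) : Prop :=
  forall t, ~ S t -> exists d, 0 < d /\ forall x, close_n n d x t -> ~ S x.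

Definition continuous_Tn (f : Tn n R -> R) : Prop :=
  forall t eps, 0 < eps -> exists d, 0 < d /\ forall x, close_n n d x t -> Rabs (f x - f t) < eps.

Lemma close_n_mono d d' x t : d <= d' -> close_n n d x t -> close_n n d' x t.
Proof.
  clear. revert x t. induction n as [|m IH]; [easy|]. intros [x1 x] [t1 t] Hd [H1 H].
  split; [lra | apply IH; assumption].
Qed.

Lemma closed_Tn_ext (S S' : Tn n R -> Prop) :
  (forall x, S x <-> S' x) -> closed_Tn S -> closed_Tn S'.
Proof.
  intros E H t Ht. destruct (H t) as [d [Hd Hfar]]; [now rewrite E|].
  exists d. split; [exact Hd|]. intros x Hx. rewrite <- E. apply Hfar, Hx.
Qed.

Lemma closed_Tn_const (P : Prop) : closed_Tn (fun _ => P).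
Proof. intros t Ht. exists 1. split; [lra | auto]. Qed.

Lemma closed_Tn_and S S' : closed_Tn S -> closed_Tn S' -> closed_Tn (fun x => S x /\ S' x).
Proof.
  intros H H' t Ht. destruct (classic (S t)) as [HS|HS].
  - destruct (H' t) as [d [Hd Hfar]]; [tauto|]. exists d. split; [exact Hd|]. intros x Hx [_ ?].
    exact (Hfar x Hx ltac:(assumption)).
  - destruct (H t HS) as [d [Hd Hfar]]. exists d. split; [exact Hd|]. intros x Hx [? _].
    exact (Hfar x Hx ltac:(assumption)).
Qed.

Lemma closed_Tn_forall {I : Type} (S : I -> Tn n R -> Prop) :
  (forall i, closed_Tn (S i)) -> closed_Tn (fun x => forall i, S i x).
Proof.
  intros H t Ht. apply not_all_ex_not in Ht as [i Hi].
  destruct (H i t Hi) as [d [Hd Hfar]]. exists d. split; [exact Hd|].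
  intros x Hx Hall. exact (Hfar x Hx (Hall i)).
Qed.

Lemma closed_Tn_impl (P : Prop) S : closed_Tn S -> closed_Tn (fun x => P -> S x).
Proof.
  intros H t Ht. apply imply_to_and in Ht as [HP HS].
  destruct (H t HS) as [d [Hd Hfar]]. exists d. split; [exact Hd|].
  intros x Hx HPS. exact (Hfar x Hx (HPS HP)).
Qed.

Lemma closed_Tn_exists_fin {I : Type} (l : list I) (S : I -> Tn n R -> Prop) :
  (forall i x, S i x -> In i l) -> (forall i, closed_Tn (S i)) -> closed_Tn (fun x => exists i, S i x).
Proof.
  intros Hl H t Ht.
  assert (Hfin : forall l', (forall i, In i l' -> ~ S i t) ->
            exists d, 0 < d /\ forall x, close_n n d x t -> forall i, In i l' -> ~ S i x).
  { induction l' as [|i0 l' IH]; intro Hnot.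
    - exists 1. split; [lra | intros x _ i []].
    - destruct IH as [d [Hd Hfar]]; [intros i Hi; apply Hnot; now right|].
      destruct (H i0 t) as [d0 [Hd0 Hfar0]]; [apply Hnot; now left|].
      exists (Rmin d d0). split; [now apply Rmin_pos|].
      intros x Hx i [<- | Hi].
      + apply Hfar0. eapply close_n_mono; [apply Rmin_r | exact Hx].
      + apply Hfar; [eapply close_n_mono; [apply Rmin_l | exact Hx] | exact Hi]. }
  destruct (Hfin l) as [d [Hd Hfar]]; [intros i _ Hi; apply Ht; now exists i|].
  exists d. split; [exact Hd|]. intros x Hx [i Hi]. exact (Hfar x Hx i (Hl i x Hi) Hi).
Qed.

Lemma closed_Tn_ge (f : Tn n R -> R) c : continuous_Tn f -> closed_Tn (fun x => c <= f x).
Proof.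
  intros Hf t Ht. apply Rnot_le_lt in Ht.
  destruct (Hf t (c - f t)) as [d [Hd Hnear]]; [lra|].
  exists d. split; [exact Hd|]. intros x Hx Hc.
  specialize (Hnear x Hx). apply Rabs_lt_between in Hnear. lra.
Qed.

Lemma closed_Tn_le (f : Tn n R -> R) c : continuous_Tn f -> closed_Tn (fun x => f x <= c).
Proof.
  intros Hf t Ht. apply Rnot_le_lt in Ht.
  destruct (Hf t (f t - c)) as [d [Hd Hnear]]; [lra|].
  exists d. split; [exact Hd|]. intros x Hx Hc.
  specialize (Hnear x Hx). apply Rabs_lt_between in Hnear. lra.
Qed.

Lemma continuous_Tn_attains_min (a b : Tn n R) (S : Tn n R -> Prop) (f : Tn n R -> R) :
  (forall x, S x -> bounded_n n a b x) -> closed_Tn S -> continuous_Tn f ->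
  (forall x, S x -> 0 <= f x) -> (exists x, S x) ->
  exists x, S x /\ forall y, S y -> f x <= f y.
Proof.
  intros Hbox Hclosed Hf Hpos Hne.
  destruct (infimum_approx S f Hpos Hne) as (m & Hm & Happrox).
  apply NNPP. intro Hnomin.
  assert (Hgt : forall x, S x -> m < f x).
  { intros x Sx. apply Rnot_le_lt. intro. apply Hnomin. exists x. split; [exact Sx|].
    intros y Sy. specialize (Hm y Sy). lra. }
  (* Without a minimiser, every point has a neighbourhood that misses [S] or on which
     [f] stays away from its infimum [m]; a finite subcover then bounds [f] away from [m]. *)
  assert (Hnbhd : forall t, exists d, 0 < d /\
            (S t -> forall x, close_n n d x t -> m + (f t - m) / 2 < f x) /\
            (~ S t -> forall x, close_n n d x t -> ~ S x)).
  { intro t. destruct (classic (S t)) as [St|St].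
    - destruct (Hf t ((f t - m) / 2)) as [d [Hd Hnear]]; [specialize (Hgt t St); lra|].
      exists d. split; [exact Hd|]. split; [|contradiction].
      intros _ x Hx. specialize (Hnear x Hx). apply Rabs_lt_between in Hnear. lra.
    - destruct (Hclosed t St) as [d [Hd Hfar]]. exists d. split; [exact Hd|].
      split; [contradiction | intros _; exact Hfar]. }
  pose (dl t := constructive_indefinite_description _ (Hnbhd t)).
  pose (delta t := mkposreal (proj1_sig (dl t)) (proj1 (proj2_sig (dl t)))).
  apply (Compactness.compactness_list n a b delta). intros [l Hcover].
  destruct (list_min_pos l (fun t => (f t - m) / 2) S) as [eps [Heps Hle]].
  { intros t St. specialize (Hgt t St). lra. }
  destruct (Happrox eps Heps) as [x [Sx Hfx]].
  destruct (Hcover x (Hbox x Sx)) as [t (Ht & _ & Hxt)].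
  destruct (proj2_sig (dl t)) as (_ & Hin & Hout).
  destruct (classic (S t)) as [St|St].
  - specialize (Hin St x Hxt). specialize (Hle t Ht St). lra.
  - exact (Hout St x Hxt Sx).
Qed.

End ClosedSets.

Lemma cdist_lipschitz P Q P' Q' : Rabs (cdist P Q - cdist P' Q') <= cdist P P' + cdist Q Q'.
Proof.
  pose proof (cdist_triangle P P' Q). pose proof (cdist_triangle P' Q' Q).
  pose proof (cdist_triangle P' P Q'). pose proof (cdist_triangle P Q Q').
  rewrite (cdist_sym Q' Q) in *. rewrite (cdist_sym P' P) in *.
  apply Rabs_le_between. lra.
Qed.

Lemma arrival_lipschitz W W' D m :
  (forall i, cdist (W i) (W' i) <= D) -> Rabs (arrival W m - arrival W' m) <= 2 * INR m * D.
Proof.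
  intro HD. induction m as [|m IH].
  - simpl. rewrite Rminus_diag, Rabs_R0. lra.
  - rewrite S_INR. cbn [arrival].
    pose proof (cdist_lipschitz (W m) (W (S m)) (W' m) (W' (S m))) as Hstep.
    pose proof (HD m). pose proof (HD (S m)).
    apply Rabs_le_between in IH, Hstep. apply Rabs_le_between. lra.
Qed.

Lemma cdist_start_arrival W i : cdist (W 0%nat) (W i) <= arrival W i.
Proof.
  induction i as [|i IH]; simpl.
  - rewrite cdist_refl. lra.
  - pose proof (cdist_triangle (W 0%nat) (W i) (W (S i))). lra.
Qed.

Lemma cdist_box P Q c :
  cdist P Q <= c ->
  fst (fst P) - c <= fst (fst Q) <= fst (fst P) + c /\
  snd (fst P) - c <= snd (fst Q) <= snd (fst P) + c /\
  fst (snd P) - c <= fst (snd Q) <= fst (snd P) + c /\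
  snd (snd P) - c <= snd (snd Q) <= snd (snd P) + c.
Proof.
  intro H. pose proof (cdist_fst P Q). pose proof (cdist_snd P Q).
  destruct P as [[] []], Q as [[] []]. unfold dist1 in *; simpl in *.
  unfold Rabs in *. repeat destruct Rcase_abs; lra.
Qed.

Definition unpack3 (x : Tn 12 R) : config * config * config :=
  match x with
  | (a, (b, (c, (d, (e, (f, (g, (h, (i, (j, (k, (l, _)))))))))))) =>
      (((a, b), (c, d)), ((e, f), (g, h)), ((i, j), (k, l)))
  end.

Definition pack3 (W1 W2 W3 : config) : Tn 12 R :=
  let '((a, b), (c, d)) := W1 in
  let '((e, f), (g, h)) := W2 in
  let '((i, j), (k, l)) := W3 in
  (a, (b, (c, (d, (e, (f, (g, (h, (i, (j, (k, (l, tt)))))))))))).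

Lemma unpack3_pack3 W1 W2 W3 : unpack3 (pack3 W1 W2 W3) = (W1, W2, W3).
Proof. destruct W1 as [[] []], W2 as [[] []], W3 as [[] []]. reflexivity. Qed.

Definition route_waypoints (A B : config) (x : Tn 12 R) : nat -> config :=
  let '(W1, W2, W3) := unpack3 x in waypoints A W1 W2 W3 B.

Lemma route_waypoints_pack3 A B W1 W2 W3 :
  route_waypoints A B (pack3 W1 W2 W3) = waypoints A W1 W2 W3 B.
Proof. unfold route_waypoints. rewrite unpack3_pack3. reflexivity. Qed.

Lemma close_route_waypoints A B d x y i :
  close_n 12 d x y -> cdist (route_waypoints A B x i) (route_waypoints A B y i) <= 2 * d.
Proof.
  destruct x as (x1 & x2 & x3 & x4 & x5 & x6 & x7 & x8 & x9 & x10 & x11 & x12 & []),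
    y as (y1 & y2 & y3 & y4 & y5 & y6 & y7 & y8 & y9 & y10 & y11 & y12 & []).
  simpl. intros (H1 & H2 & H3 & H4 & H5 & H6 & H7 & H8 & H9 & H10 & H11 & H12 & _).
  pose proof (Rabs_pos (x1 - y1)).
  destruct i as [|[|[|[|i]]]]; simpl; try (rewrite cdist_refl; lra);
    apply Rmax_lub; unfold dist1; simpl; lra.
Qed.

Definition waypoint_lipschitz (g : (nat -> config) -> R) : Prop :=
  exists L, 0 <= L /\
  forall W W' D, (forall i, cdist (W i) (W' i) <= D) -> Rabs (g W - g W') <= L * D.

Lemma continuous_route_waypoints A B g :
  waypoint_lipschitz g -> continuous_Tn 12 (fun x => g (route_waypoints A B x)).
Proof.
  intros [L [HL Hg]] t eps Heps.
  set (d := eps / (2 * (L + 1))).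
  assert (Hd : 2 * (L + 1) * d = eps) by (unfold d; field; lra).
  assert (0 < d) by (unfold d; apply Rdiv_lt_0_compat; lra).
  exists d. split; [assumption|]. intros x Hx.
  pose proof (Hg _ _ _ (fun i => close_route_waypoints A B d x t i Hx)). nra.
Qed.

Lemma closed_route A B : closed_Tn 12 (fun x => exists j0 e k, route j0 e k (route_waypoints A B x)).
Proof.
  assert (Hin_ord : forall j i, closed_Tn 12 (fun x => in_ord j (route_waypoints A B x i))).
  { intros j i. apply closed_Tn_ge, (continuous_route_waypoints A B (fun W => sep j (W i))).
    exists 2. split; [lra|]. intros W W' D HD. pose proof (sep_lipschitz j (W i) (W' i)).
    pose proof (HD i). lra. }
  assert (Hpad : forall i, closed_Tn 12 (fun x => route_waypoints A B x i = route_waypoints A B x 4%nat)).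
  { intro i. apply (closed_Tn_ext _ (fun x => cdist (route_waypoints A B x i) (route_waypoints A B x 4%nat) <= 0)).
    - intro x. split; [apply cdist_eq0 | intros ->; rewrite cdist_refl; lra].
    - apply closed_Tn_le, (continuous_route_waypoints A B (fun W => cdist (W i) (W 4%nat))).
      exists 2. split; [lra|]. intros W W' D HD.
      pose proof (cdist_lipschitz (W i) (W 4%nat) (W' i) (W' 4%nat)).
      pose proof (HD i). pose proof (HD 4%nat). lra. }
  apply (closed_Tn_exists_fin 12 [oR; oU; oL; oD]); [intros []; simpl; tauto | intro j0].
  apply (closed_Tn_exists_fin 12 [true; false]); [intros []; simpl; tauto | intro e].
  apply (closed_Tn_exists_fin 12 [0; 1; 2; 3]%nat).
  { intros k x [Hk _]. destruct k as [|[|[|[|k]]]]; simpl; tauto || lia. }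
  intro k. unfold route.
  repeat apply closed_Tn_and; try apply closed_Tn_const;
    apply closed_Tn_forall; intro i; apply closed_Tn_impl; [apply closed_Tn_and|]; auto.
Qed.

Definition shift (c : R) (P : config) : config :=
  ((fst (fst P) + c, snd (fst P) + c), (fst (snd P) + c, snd (snd P) + c)).

Lemma route_waypoints_bounded A B C0 x :
  arrival (route_waypoints A B x) 4 <= C0 ->
  bounded_n 12 (pack3 (shift (- C0) A) (shift (- C0) A) (shift (- C0) A))
               (pack3 (shift C0 A) (shift C0 A) (shift C0 A)) x.
Proof.
  intro Hcost.
  assert (Hnear : forall i, (i <= 4)%nat -> cdist A (route_waypoints A B x i) <= C0).
  { intros i Hi. pose proof (cdist_start_arrival (route_waypoints A B x) i).
    pose proof (arrival_mono (route_waypoints A B x) i 4 Hi).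
    replace A with (route_waypoints A B x 0%nat) at 1 by (unfold route_waypoints; now destruct (unpack3 x) as [[]]).
    lra. }
  pose proof (cdist_box _ _ _ (Hnear 1%nat ltac:(lia))) as B1.
  pose proof (cdist_box _ _ _ (Hnear 2%nat ltac:(lia))) as B2.
  pose proof (cdist_box _ _ _ (Hnear 3%nat ltac:(lia))) as B3.
  destruct x as (x1 & x2 & x3 & x4 & x5 & x6 & x7 & x8 & x9 & x10 & x11 & x12 & []),
    A as [[a1 a2] [a3 a4]].
  simpl in *. repeat split; lra.
Qed.

Lemma optimal_route A B :
  (exists j0 e k W1 W2 W3, route j0 e k (waypoints A W1 W2 W3 B)) ->
  exists j0 e k W1 W2 W3, route j0 e k (waypoints A W1 W2 W3 B) /\
    forall j0' e' k' W1' W2' W3', route j0' e' k' (waypoints A W1' W2' W3' B) ->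
      arrival (waypoints A W1 W2 W3 B) 4 <= arrival (waypoints A W1' W2' W3' B) 4.
Proof.
  intros (j0 & e & k & W1 & W2 & W3 & Hroute).
  set (C0 := arrival (waypoints A W1 W2 W3 B) 4).
  set (cost x := arrival (route_waypoints A B x) 4).
  set (S x := (exists j0 e k, route j0 e k (route_waypoints A B x)) /\ cost x <= C0).
  assert (HS : forall W1' W2' W3', S (pack3 W1' W2' W3') <->
            (exists j0 e k, route j0 e k (waypoints A W1' W2' W3' B)) /\
            arrival (waypoints A W1' W2' W3' B) 4 <= C0).
  { intros. unfold S, cost. rewrite route_waypoints_pack3. reflexivity. }
  assert (Hcost : continuous_Tn 12 cost).
  { apply (continuous_route_waypoints A B (fun W => arrival W 4)). exists 8. split; [lra|]. intros W W' D HD.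
    pose proof (arrival_lipschitz W W' D 4 HD). simpl INR in *. lra. }
  destruct (continuous_Tn_attains_min 12
              (pack3 (shift (- C0) A) (shift (- C0) A) (shift (- C0) A))
              (pack3 (shift C0 A) (shift C0 A) (shift C0 A)) S cost) as [x [Sx Hmin]].
  - intros x [_ Hx]. apply (route_waypoints_bounded A B C0 x Hx).
  - apply closed_Tn_and; [apply closed_route | apply closed_Tn_le, Hcost].
  - exact Hcost.
  - intros x _. apply arrival_ge0.
  - exists (pack3 W1 W2 W3). apply HS. split; [eauto | apply Rle_refl].
  - destruct (unpack3 x) as [[W1' W2'] W3'] eqn:Ex.
    assert (Hx : route_waypoints A B x = waypoints A W1' W2' W3' B)
      by (unfold route_waypoints; rewrite Ex; reflexivity).
    destruct Sx as [(j0' & e' & k' & Hroute') HC0]. unfold cost in *. rewrite Hx in *.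
    exists j0', e', k', W1', W2', W3'. split; [exact Hroute'|].
    intros j0'' e'' k'' W1'' W2'' W3'' Hroute''.
    destruct (Rle_or_lt (arrival (waypoints A W1'' W2'' W3'' B) 4) C0) as [Hle|Hgt]; [|lra].
    assert (HS'' : S (pack3 W1'' W2'' W3'')) by (apply HS; split; [exists j0'', e'', k'' | ]; assumption).
    specialize (Hmin _ HS''). rewrite route_waypoints_pack3 in Hmin. exact Hmin.
Qed.

Theorem corollary3p2 :
  forall A B : config, F2 A -> F2 B ->
  exists (m1 m2 : R -> pt) (t0 t1 : R),
    feasible_schedule m1 m2 t0 t1 A B /\
    (forall (n1 n2 : R -> pt) (s0 s1 : R),
        feasible_schedule n1 n2 s0 s1 A B -> t1 - t0 <= s1 - s0) /\
    no_repeat_ordering m1 m2 t0 t1 ord_right /\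
    no_repeat_ordering m1 m2 t0 t1 ord_left /\
    no_repeat_ordering m1 m2 t0 t1 ord_up /\
    no_repeat_ordering m1 m2 t0 t1 ord_down.
Proof.
  intros A B FA FB.
  assert (Hbest : exists j0 e k W1 W2 W3,
    route j0 e k (waypoints A W1 W2 W3 B) /\
    ((0 < k)%nat -> forall j, ~ (in_ord j A /\ in_ord j B)) /\
    forall n1 n2 s0 s1, feasible_schedule n1 n2 s0 s1 A B ->
      arrival (waypoints A W1 W2 W3 B) 4 <= s1 - s0).
  { destruct (classic (exists j, in_ord j A /\ in_ord j B)) as [[j [HA HB]] | Hsep].
    - exists j, true, 0%nat, B, B, B. split; [apply direct_route; assumption|]. split; [lia|].
      intros n1 n2 s0 s1 Hn. pose proof (feasible_makespan_ge_cdist _ _ _ _ _ _ Hn).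
      simpl. rewrite !cdist_refl. lra.
    - destruct (optimal_route A B (route_exists A B FA FB))
        as (j0 & e & k & W1 & W2 & W3 & Hroute & Hopt).
      exists j0, e, k, W1, W2, W3. split; [exact Hroute|]. split; [firstorder|].
      intros n1 n2 s0 s1 Hn.
      destruct (schedule_route _ _ _ _ _ _ Hn) as (j0' & e' & k' & W1' & W2' & W3' & Hroute' & Hcost).
      pose proof (Hopt _ _ _ _ _ _ Hroute'). lra. }
  destruct Hbest as (j0 & e & k & W1 & W2 & W3 & Hroute & Hsep & Hopt).
  destruct (route_schedule j0 e k _ Hroute Hsep) as [Hfeas Hnorep].
  do 4 eexists. split; [exact Hfeas|]. split.
  - intros n1 n2 s0 s1 Hn. rewrite Rminus_0_r. exact (Hopt _ _ _ _ Hn).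
  - exact (conj (Hnorep oR) (conj (Hnorep oL) (conj (Hnorep oU) (Hnorep oD)))).
Qed.
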